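(* Let $\mu:\mathbb{R}^{n\times n}\to\mathbb{R}$ be the matrix measure induced by an orthant-monotonic norm on $\mathbb{R}^n$. Then for every $A\in\mathbb{R}^{n\times n}$ and every diagonal matrix $D\in\mathbb{R}^{n\times n}$ with diagonal entries $d_{11},\dots,d_{nn}$, \[\mu(A)-\max_i\{d_{ii}\}\le \mu(A-D)\le \mu(A)-\min_i\{d_{ii}\}.\]
   Context: For a vector norm $|\cdot|$ on $\mathbb{R}^n$, the induced matrix norm is $\|A\|=\max_{|x|=1}|Ax|$ and the induced matrix measure is $\mu(A)=\lim_{\varepsilon\to0^+}(\|I_n+\varepsilon A\|-1)/\varepsilon$. A norm $|\cdot|$ on $\mathbb{R}^n$ is orthant-monotonic if for all $x,y\in\mathbb{R}^n$: whenever $x_iy_i\ge 0$ and $|x_i|\le|y_i|$ for all $i$, then $|x|\le|y|$. *)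

From HB Require Import structures.
From mathcomp Require Import all_boot all_order all_algebra.
From mathcomp Require Import all_classical all_reals all_analysis.
Set Implicit Arguments. Unset Strict Implicit. Unset Printing Implicit Defensive.
Import Order.TTheory GRing.Theory Num.Theory.
Import numFieldNormedType.Exports.
Local Open Scope classical_set_scope.
Local Open Scope ring_scope.

Definition is_vnorm (R : realType) (n : nat) (nu : 'cV[R]_n -> R) : Prop :=
  [/\ (forall x, 0 <= nu x),
      (forall x, nu x = 0 -> x = 0),
      (forall (a : R) x, nu (a *: x) = `|a| * nu x) &
      (forall x y, nu (x + y) <= nu x + nu y)].

Definition orthant_monotonic (R : realType) (n : nat) (nu : 'cV[R]_n -> R) : Prop :=
  forall x y : 'cV[R]_n,
    (forall i, 0 <= x i ord0 * y i ord0) ->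
    (forall i, `|x i ord0| <= `|y i ord0|) ->
    nu x <= nu y.

Definition induced_norm (R : realType) (n : nat) (nu : 'cV[R]_n -> R)
  (A : 'M[R]_n) : R :=
  sup [set nu (A *m x) | x in [set x | nu x = 1]].

Definition matrix_measure (R : realType) (n : nat) (nu : 'cV[R]_n -> R)
  (A : 'M[R]_n) : R :=
  lim ((fun e : R => ((induced_norm nu (1%:M + e *: A) - 1) / e : R)) @ (0 : R)^'+).

Definition max_diag (R : realType) (n : nat) (D : 'M[R]_n.+1) : R :=
  \big[Num.max/D ord0 ord0]_(i < n.+1) D i i.
Definition min_diag (R : realType) (n : nat) (D : 'M[R]_n.+1) : R :=
  \big[Num.min/D ord0 ord0]_(i < n.+1) D i i.

(* The quotient e |-> (||I + eM|| - 1) / e is nondecreasing and bounded below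
   on (0, +oo), so mu(M) is its infimum there. Since
   I + (e/2)(B + E) = (I + eB)/2 + (I + eE)/2, convexity of the induced norm
   gives the subadditivity mu(B + E) <= mu(B) + mu(E). For a diagonal E and
   small e > 0 the diagonal of I + eE lies in [0, 1 + e max E_ii], so
   orthant monotonicity bounds ||I + eE|| by 1 + e max E_ii, whence
   mu(E) <= max E_ii. The theorem follows from A - D = A + (-D) and
   A = (A - D) + D. *)
From HB Require Import structures.
From mathcomp Require Import all_boot all_order all_algebra.
From mathcomp Require Import all_classical all_reals all_analysis.
From mathcomp Require Import ring lra.
Import Order.TTheory GRing.Theory Num.Theory.
Import numFieldNormedType.Exports.
Local Open Scope ring_scope.
Local Open Scope classical_set_scope.

Lemma is_diag_mxD (V : nmodType) m n (A B : 'M[V]_(m, n)) :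
  is_diag_mx A -> is_diag_mx B -> is_diag_mx (A + B).
Proof.
move=> /is_diag_mxP A_diag /is_diag_mxP B_diag; apply/is_diag_mxP => i j ij.
by rewrite mxE A_diag ?B_diag ?addr0.
Qed.

Lemma is_diag_mxZ (R : pzRingType) m n a (A : 'M[R]_(m, n)) :
  is_diag_mx A -> is_diag_mx (a *: A).
Proof.
move=> /is_diag_mxP A_diag; apply/is_diag_mxP => i j ij.
by rewrite mxE A_diag ?mulr0.
Qed.

Section OrthantMonotonicMeasure.
Context {R : realType} {n : nat} {nu : 'cV[R]_n.+1 -> R}.
Hypothesis nu_norm : is_vnorm nu.
Hypothesis nu_om : orthant_monotonic nu.

Local Notation vec := 'cV[R]_n.+1.
Local Notation mx := 'M[R]_n.+1.
Local Notation ev j := (delta_mx j ord0 : vec).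

Lemma nu_ge0 (x : vec) : 0 <= nu x. Proof. by case: nu_norm. Qed.
Lemma nu_eq0 (x : vec) : nu x = 0 -> x = 0.
Proof. by case: nu_norm => _ + _ _; apply. Qed.
Lemma nuZ a (x : vec) : nu (a *: x) = `|a| * nu x. Proof. by case: nu_norm. Qed.
Lemma nuD (x y : vec) : nu (x + y) <= nu x + nu y. Proof. by case: nu_norm. Qed.

Lemma nu0 : nu 0 = 0.
Proof. by rewrite -(scale0r (0 : vec)) nuZ normr0 mul0r. Qed.

Lemma nu_gt0 {x : vec} : x != 0 -> 0 < nu x.
Proof.
by move=> x0; rewrite lt0r nu_ge0 andbT; apply: contra x0 => /eqP/nu_eq0->.
Qed.

Lemma nu_sum I (r : seq I) (F : I -> vec) :
  nu (\sum_(i <- r) F i) <= \sum_(i <- r) nu (F i).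
Proof.
apply: (big_rec2 (fun y1 y2 => nu y1 <= y2)); first by rewrite nu0.
by move=> i y1 y2 _ le_y; apply: le_trans (nuD _ _) _; rewrite lerD2l.
Qed.

Lemma nu_normalize {x : vec} : x != 0 -> nu ((nu x)^-1 *: x) = 1.
Proof.
move=> x0; have nux_gt0 := nu_gt0 x0.
by rewrite nuZ ger0_norm ?invr_ge0 ?ltW // mulVf // lt0r_neq0.
Qed.

Lemma ev_neq0 j : ev j != 0.
Proof.
by apply/eqP => /matrixP/(_ j ord0); rewrite !mxE !eqxx => /eqP; rewrite oner_eq0.
Qed.

(* This is where orthant monotonicity replaces the equivalence of norms in
   finite dimension. *)
Lemma coord_nu_le (x : vec) j : `|x j ord0| * nu (ev j) <= nu x.
Proof.
rewrite -nuZ; apply: nu_om => i; rewrite !mxE; case: (eqVneq i j) => [->|_] /=;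
  by rewrite ?mulr1 ?mulr0 ?mul0r ?normr0 ?sqr_ge0.
Qed.

Lemma nu_mulmx_bounded (M : mx) : exists K, forall x, nu (M *m x) <= K * nu x.
Proof.
exists (\sum_j nu (M *m ev j) / nu (ev j)) => x.
have x_sum : x = \sum_j x j ord0 *: ev j.
  apply/matrixP => i k; rewrite (ord1 k) summxE (bigD1 i) //= big1 ?addr0.
    by rewrite !mxE !eqxx mulr1.
  by move=> j /negPf ji; rewrite !mxE eq_sym ji mulr0.
rewrite {1}x_sum mulmx_sumr mulr_suml; apply: le_trans (nu_sum _ _ _) _.
apply: ler_sum => j _; have evj_gt0 := nu_gt0 (ev_neq0 j).
rewrite -scalemxAr nuZ [_ * nu x]mulrC mulrA mulrAC.
by rewrite ler_wpM2r ?nu_ge0 // ler_pdivlMr ?coord_nu_le.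
Qed.

Lemma unit_vec_exists : exists u : vec, nu u = 1.
Proof.
by exists ((nu (ev ord0))^-1 *: ev ord0); rewrite nu_normalize ?ev_neq0.
Qed.

Lemma induced_norm_has_sup (M : mx) :
  has_sup [set nu (M *m x) | x in [set x | nu x = 1]].
Proof.
have [u u1] := unit_vec_exists.
split; first by exists (nu (M *m u)), u.
have [K MK] := nu_mulmx_bounded M.
by exists K => _ [x /= x1 <-]; rewrite -[K]mulr1 -x1 MK.
Qed.

Lemma induced_norm_ge (M : mx) {x : vec} :
  nu x = 1 -> nu (M *m x) <= induced_norm nu M.
Proof.
by move=> x1; apply: sup_upper_bound (induced_norm_has_sup M) _ _; exists x.
Qed.

Lemma induced_norm_le (M : mx) c :
  (forall x, nu x = 1 -> nu (M *m x) <= c) -> induced_norm nu M <= c.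
Proof.
move=> Mc; apply: ge_sup; first by case: (induced_norm_has_sup M).
by move=> _ [x /= x1 <-]; apply: Mc.
Qed.

Lemma nu_mulmx_le (M : mx) x : nu (M *m x) <= induced_norm nu M * nu x.
Proof.
have [->|x0] := eqVneq x 0; first by rewrite mulmx0 nu0 mulr0.
have nux_gt0 := nu_gt0 x0.
have := induced_norm_ge M (nu_normalize x0).
by rewrite -scalemxAr nuZ ger0_norm ?invr_ge0 ?nu_ge0 // mulrC ler_pdivrMr.
Qed.

Lemma induced_norm1 : induced_norm nu (1%:M : mx) = 1.
Proof.
have [u u1] := unit_vec_exists.
apply/le_anti; rewrite induced_norm_le => [|x x1]; last by rewrite mul1mx x1.
by rewrite -[X in X <= _]u1 -{1}(mul1mx u) induced_norm_ge.
Qed.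

Lemma induced_normD (P Q : mx) :
  induced_norm nu (P + Q) <= induced_norm nu P + induced_norm nu Q.
Proof.
apply: induced_norm_le => x x1; rewrite mulmxDl; apply: le_trans (nuD _ _) _.
by apply: lerD; rewrite -[induced_norm _ _]mulr1 -x1 nu_mulmx_le.
Qed.

Lemma induced_normZ_le a (P : mx) :
  induced_norm nu (a *: P) <= `|a| * induced_norm nu P.
Proof.
apply: induced_norm_le => x x1; rewrite -scalemxAl nuZ.
by rewrite ler_wpM2l // -[induced_norm _ _]mulr1 -x1 nu_mulmx_le.
Qed.

Definition measure_quotient (M : mx) (e : R) : R :=
  (induced_norm nu (1%:M + e *: M) - 1) / e.

Lemma matrix_measureE (M : mx) :
  matrix_measure nu M = lim (measure_quotient M @ 0^'+).
Proof. by []. Qed.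

Lemma induced_norm_conv (P Q : mx) {a : R} : 0 <= a <= 1 ->
  induced_norm nu (a *: P + (1 - a) *: Q) <=
  a * induced_norm nu P + (1 - a) * induced_norm nu Q.
Proof.
case/andP=> a_ge0 a_le1; apply: le_trans (induced_normD _ _) _.
apply: lerD; apply: le_trans (induced_normZ_le _ _) _;
  by rewrite ger0_norm ?subr_ge0.
Qed.

Lemma measure_quotient_le (M : mx) {s t : R} :
  0 < s -> s <= t -> measure_quotient M s <= measure_quotient M t.
Proof.
move=> s_gt0 le_st; have t_gt0 := lt_le_trans s_gt0 le_st.
have st_01 : 0 <= s / t <= 1.
  by rewrite divr_ge0 ?ler_pdivrMr ?mul1r // ltW.
have := induced_norm_conv (1%:M + t *: M) 1%:M st_01.
have -> : s / t *: (1%:M + t *: M) + (1 - s / t) *: 1%:M = 1%:M + s *: M.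
  rewrite scalerDr scalerA divfK ?gt_eqF // scalerBl scale1r.
  by rewrite addrC addrA subrK.
rewrite induced_norm1 mulr1 /measure_quotient ler_pdivrMr // => conv.
by rewrite mulrAC -mulrA mulrC mulrBr mulr1; lra.
Qed.

Lemma measure_quotient_ge (M : mx) {e : R} :
  0 < e -> - induced_norm nu M <= measure_quotient M e.
Proof.
move=> e_gt0; rewrite /measure_quotient ler_pdivlMr // mulNr lerNl opprB.
have := induced_normD (1%:M + e *: M) (- e *: M).
rewrite scaleNr addrK induced_norm1 => le1.
have := induced_normZ_le (- e) M.
by rewrite scaleNr normrN gtr0_norm // mulrC; lra.
Qed.

Lemma measure_quotient_cvg (M : mx) : cvg (measure_quotient M @ 0^'+).
Proof.
apply: nondecreasing_at_right_is_cvgr.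
  near=> x => s t; rewrite !in_itv /= => /andP[s_gt0 _] _.
  exact: measure_quotient_le.
near=> x; exists (- induced_norm nu M) => _ [e /andP[e_gt0 _] <-].
exact: measure_quotient_ge.
Unshelve. all: by end_near.
Qed.

Lemma matrix_measure_le_quotient (M : mx) {t : R} :
  0 < t -> matrix_measure nu M <= measure_quotient M t.
Proof.
move=> t_gt0; apply: limr_le; first exact: measure_quotient_cvg.
near=> e; apply: measure_quotient_le.
  by near: e; exact: nbhs_right_gt.
by apply: ltW; near: e; exact: nbhs_right_lt.
Unshelve. all: by end_near.
Qed.

Lemma measure_quotientD (B E : mx) {e : R} : 0 < e ->
  measure_quotient (B + E) (e / 2) <=
  measure_quotient B e + measure_quotient E e.
Proof.
move=> e_gt0; have half_01 : 0 <= (2 : R)^-1 <= 1 by apply/andP; split; lra.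
have := induced_norm_conv (1%:M + e *: B) (1%:M + e *: E) half_01.
have -> : 2^-1 *: (1%:M + e *: B) + (1 - 2^-1) *: (1%:M + e *: E) =
          1%:M + e / 2 *: (B + E) :> mx.
  by apply/matrixP => i j; rewrite !mxE; field.
rewrite /measure_quotient => conv.
rewrite ler_pdivrMr ?divr_gt0 //.
set NB := induced_norm nu (1%:M + e *: B) in conv *.
set NE := induced_norm nu (1%:M + e *: E) in conv *.
have -> : ((NB - 1) / e + (NE - 1) / e) * (e / 2) = (NB + NE) / 2 - 1.
  by field; rewrite gt_eqF.
lra.
Qed.

Lemma matrix_measureD (B E : mx) :
  matrix_measure nu (B + E) <= matrix_measure nu B + matrix_measure nu E.
Proof.
rewrite !matrix_measureE -limD; [|exact: measure_quotient_cvg..].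
apply: limr_ge.
  exact: is_cvgD (measure_quotient_cvg B) (measure_quotient_cvg E).
near=> e; have e_gt0 : 0 < e by near: e; exact: nbhs_right_gt.
have e2_gt0 : 0 < e / 2 by rewrite divr_gt0.
apply: le_trans (matrix_measure_le_quotient _ e2_gt0) _.
exact: measure_quotientD.
Unshelve. all: by end_near.
Qed.

Lemma induced_norm_diag_le {E : mx} {m : R} :
  is_diag_mx E -> (forall i, 0 <= E i i <= m) -> induced_norm nu E <= m.
Proof.
move=> /is_diag_mxP E_diag E_m; apply: induced_norm_le => x x1.
have m_ge0 : 0 <= m by case/andP: (E_m ord0); apply: le_trans.
have Ex i : (E *m x) i ord0 = E i i * x i ord0.
  rewrite mxE (bigD1 i) //= big1 ?addr0 // => j ji.
  by rewrite E_diag ?mul0r // eq_sym.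
rewrite -[m]mulr1 -x1 -[m]ger0_norm // -nuZ; apply: nu_om => i;
  rewrite Ex mxE; case/andP: (E_m i) => Eii_ge0 Eii_le.
  by rewrite mulrACA; apply: mulr_ge0; [exact: mulr_ge0 | exact: sqr_ge0].
by rewrite !normrM (ger0_norm Eii_ge0) (ger0_norm m_ge0) ler_wpM2r.
Qed.

Lemma matrix_measure_diag_le {E : mx} {c : R} :
  is_diag_mx E -> (forall i, E i i <= c) -> matrix_measure nu E <= c.
Proof.
move=> E_diag E_c; set S := \sum_i `|E i i|.
have S1_gt0 : 0 < 1 + S by rewrite ltr_pwDl ?sumr_ge0.
pose e := (1 + S)^-1; have e_gt0 : 0 < e by rewrite invr_gt0.
have eE_ge i : - 1 <= e * E i i.
  rewrite lerNl -mulrN; apply: le_trans (ler_norm _) _.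
  rewrite normrM normrN gtr0_norm // ler_pdivrMl // mulr1.
  by rewrite /S (bigD1 i) //= ler_wpDl // lerDl sumr_ge0.
apply: le_trans (matrix_measure_le_quotient E e_gt0) _.
rewrite /measure_quotient ler_pdivrMr // lerBlDl mulrC.
apply: induced_norm_diag_le; first exact/is_diag_mxD/is_diag_mxZ/E_diag.
move=> i; rewrite !mxE eqxx mulr1n; apply/andP; split.
  by rewrite -lerBlDl sub0r.
by rewrite lerD2l ler_wpM2l // ltW.
Qed.

End OrthantMonotonicMeasure.

Lemma max_diag_ge {R : realType} {n : nat} (D : 'M[R]_n.+1) i :
  D i i <= max_diag D.
Proof. by rewrite /max_diag (bigD1 i) //= le_max lexx. Qed.

Lemma min_diag_le {R : realType} {n : nat} (D : 'M[R]_n.+1) i :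
  min_diag D <= D i i.
Proof. by rewrite /min_diag (bigD1 i) //= ge_min lexx. Qed.

Theorem proposition1 (R : realType) (n : nat) (nu : 'cV[R]_n.+1 -> R) :
  is_vnorm nu -> orthant_monotonic nu ->
  forall (A D : 'M[R]_n.+1), is_diag_mx D ->
    matrix_measure nu A - max_diag D <= matrix_measure nu (A - D) /\
    matrix_measure nu (A - D) <= matrix_measure nu A - min_diag D.
Proof.
move=> nu_norm nu_om A D D_diag; split.
  rewrite lerBlDr -{1}[A](subrK D).
  apply: le_trans (matrix_measureD nu_norm nu_om _ _) _; rewrite lerD2l.
  apply: (matrix_measure_diag_le nu_norm nu_om D_diag) => i.
  exact: max_diag_ge.
apply: le_trans (matrix_measureD nu_norm nu_om A (- D)) _; rewrite lerD2l.
apply: (matrix_measure_diag_le nu_norm nu_om).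
  by rewrite -scaleN1r is_diag_mxZ.
by move=> i; rewrite mxE lerN2 min_diag_le.
Qed.
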